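(* Let $X$ be a real Banach space, $\varphi$ a strictly convex increasing function on $[0,\infty)$ with $\varphi(0)=0$, and $r$ a symmetric real random variable with $\|r\|_\infty=1$. Then: (1) A point $x\in S_X$ is an extreme point of $B_X$ if and only if [$y\in X$ and $\mathbb{E}[\varphi(\|x+ry\|)]=\varphi(1)$] implies $y=0$. (2) A point $x\in S_X$ is a strongly extreme point of $B_X$ if and only if for every $\epsilon>0$ there is $\delta>0$ such that $\mathbb{E}[\varphi(\|x+ry\|)]\ge\varphi(1)+\delta$ whenever $\|y\|\ge\epsilon$. (3) $X$ is uniformly convex if and only if $\delta_\varphi(\epsilon)>0$ for every $\epsilon>0$, where $\delta_\varphi(\epsilon)=\inf\{\mathbb{E}[\varphi(\|x+ry\|)]-\varphi(1): x\in S_X,\ \|y\|\ge\epsilon\}$.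
   Context: $S_X$ and $B_X$ are the unit sphere and closed unit ball of $X$. A point $x\in S_X$ is an extreme point of $B_X$ if $\max\{\|x+y\|,\|x-y\|\}=1$ implies $y=0$. It is a strongly extreme point of $B_X$ if for every $\epsilon>0$ there is $\delta>0$ with $\inf\{\max\{\|x+y\|,\|x-y\|\}:\|y\|\ge\epsilon\}\ge1+\delta$. $X$ is uniformly convex if for every $\epsilon>0$ there is $\delta>0$ with $\inf\{\max\{\|x+y\|,\|x-y\|\}:\|y\|\ge\epsilon,\|x\|=1\}\ge1+\delta$. $\varphi$ strictly convex means $\varphi(\frac{s+t}{2})<\frac{\varphi(s)+\varphi(t)}{2}$ for distinct $s,t$. A random variable is symmetric if $r$ and $-r$ have the same distribution. *)

From HB Require Import structures.
From mathcomp Require Import all_boot all_order all_algebra.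
From mathcomp Require Import all_classical all_reals all_analysis ess_sup_inf.
Set Implicit Arguments. Unset Strict Implicit. Unset Printing Implicit Defensive.
Import Order.TTheory GRing.Theory Num.Theory.
Import numFieldNormedType.Exports.
Local Open Scope classical_set_scope.
Local Open Scope ring_scope.

Section defs.
Context {R : realType} {X : normedModType R}.

Definition extreme_pt (x : X) : Prop :=
  `|x| = 1 /\ forall y : X, Num.max `|x + y| `|x - y| = 1 -> y = 0.

Definition strongly_extreme_pt (x : X) : Prop :=
  `|x| = 1 /\ forall eps : R, 0 < eps -> exists2 delta : R, 0 < delta &
    forall y : X, eps <= `|y| -> 1 + delta <= Num.max `|x + y| `|x - y|.

Definition uniformly_convex : Prop :=
  forall eps : R, 0 < eps -> exists2 delta : R, 0 < delta &
    forall x y : X, `|x| = 1 -> eps <= `|y| ->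
      1 + delta <= Num.max `|x + y| `|x - y|.

Definition strictly_convex_on_nonneg (phi : R -> R) : Prop :=
  forall s t : R, 0 <= s -> 0 <= t -> s != t ->
    phi ((s + t) / 2) < (phi s + phi t) / 2.

Definition increasing_on_nonneg (phi : R -> R) : Prop :=
  forall s t : R, 0 <= s -> s <= t -> phi s <= phi t.

End defs.

Section prob.
Context {R : realType} {d : measure_display} {T : measurableType d}.

Definition symmetric_rv (P : probability T R) (r : T -> R) : Prop :=
  forall A : set R, measurable A ->
    P (r @^-1` A) = P ((fun w => - r w) @^-1` A).

Definition Ephi {X : normedModType R} (P : probability T R) (r : T -> R)
  (phi : R -> R) (x y : X) : \bar R :=
  (\int[P]_w (phi `|x + r w *: y|)%:E)%E.

Definition delta_phi {X : normedModType R} (P : probability T R) (r : T -> R)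
  (phi : R -> R) (eps : R) : \bar R :=
  ereal_inf [set (Ephi P r phi xy.1 xy.2 - (phi 1)%:E)%E
             | xy in [set xy : X * X | `|xy.1| = 1 /\ eps <= `|xy.2|]].
End prob.

From mathcomp Require Import all_boot all_order all_algebra.
From mathcomp Require Import all_classical all_reals all_analysis ess_sup_inf.
From mathcomp Require Import ring lra zify measurable_realfun.
Set Implicit Arguments. Unset Strict Implicit. Unset Printing Implicit Defensive.
Import Order.TTheory GRing.Theory Num.Theory.
Import numFieldNormedType.Exports.
Local Open Scope classical_set_scope.
Local Open Scope ring_scope.

(* Write [spread x z] for [max(|x + z|, |x - z|)].  As [r] and [-r] have the same
   law, [2 E phi(|x + r y|) = E (phi(|x + r y|) + phi(|x - r y|))].  For [a + b >= 2]
   and [max(a, b) >= 1 + c], convexity and monotonicity of [phi] give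
   [phi a + phi b >= phi(1 + c) + phi(1 - c)], which exceeds [2 phi 1] by a positive
   gap when [c > 0] (strict convexity).  Since [|r|] has essential supremum [1], the
   event [|r| >= 1/2] has positive probability, so [spread x (t y) >= 1 + c] for all
   [|t| >= 1/2] forces [E phi(|x + r y|) >= phi 1 + kappa(c)] with [kappa(c) > 0].
   Conversely [|r| <= 1] a.s. and [|x + t y| <= spread x y] for [|t| <= 1] give
   [E phi(|x + r y|) <= phi(spread x y)], and right continuity of [phi] at [1] turns
   a lower bound [phi 1 + e] on the expectation into [spread x y >= 1 + dl].
   Convexity of [phi] follows from midpoint convexity and monotonicity by dyadic
   approximation. *)

Lemma convex_comb_ge0 (R : realFieldType) (u w l : R) :
  0 <= u -> 0 <= w -> 0 <= l <= 1 -> 0 <= u + l * (w - u).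
Proof.
move=> u0 w0 /andP[l0 l1].
have -> : u + l * (w - u) = (1 - l) * u + l * w by ring.
by apply: addr_ge0; apply: mulr_ge0; rewrite ?subr_ge0.
Qed.

Section midpoint_convex.
Variables (R : realType) (phi : R -> R).
Hypothesis phi_mid : forall s t : R, 0 <= s -> 0 <= t ->
  phi ((s + t) / 2) <= (phi s + phi t) / 2.
Hypothesis phi_incr : increasing_on_nonneg phi.

Lemma midpoint_convex_dyadic (n k : nat) (u w : R) : (k <= 2 ^ n)%N ->
  0 <= u -> 0 <= w ->
  phi (u + k%:R / 2 ^+ n * (w - u)) <= phi u + k%:R / 2 ^+ n * (phi w - phi u).
Proof.
elim: n k => [|n IH] k + u0 w0.
  rewrite expr0 divr1 expn0 leq_eqVlt ltnS leqn0 => /orP[]/eqP->.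
    by rewrite !mul1r !(addrC u) !(addrC (phi u)) !subrK.
  by rewrite !mul0r !addr0.
move=> kle; set q : R := 2 ^+ n.
have q0 : 0 < q by rewrite exprn_gt0.
have qE (i : nat) : i%:R / (2 * q) = i%:R / 2 / q by rewrite invfM mulrA.
have l01 (i : nat) : (i <= 2 ^ n)%N -> 0 <= i%:R / q <= 1.
  move=> ile; apply/andP; split; first by rewrite divr_ge0 // ltW.
  by rewrite ler_pdivrMr // mul1r /q -natrX ler_nat.
(* an odd numerator 2j+1 sits halfway between the dyadic points j and j+1 of level n *)
have kE : k = (odd k + k./2.*2)%N by rewrite odd_double_half.
rewrite exprS -/q qE; move: kle; rewrite {}kE expnS.
case: (odd k) => /= kle; set j := k./2 in kle *; last first.
  have -> : (j.*2)%:R / 2 = j%:R :> R by rewrite -addnn natrD; field.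
  by apply: IH => //; lia.
have jle : (j <= 2 ^ n)%N by lia.
have j1le : (j.+1 <= 2 ^ n)%N by have := expn_gt0 2 n; lia.
have -> : (1 + j.*2)%:R / 2 = (j%:R + j.+1%:R) / 2 :> R.
  by rewrite -addnn -addn1 !natrD; field.
have ha := convex_comb_ge0 u0 w0 (l01 _ jle).
have hb := convex_comb_ge0 u0 w0 (l01 _ j1le).
set a := j%:R / q in ha *; set b := j.+1%:R / q in hb *.
have -> : u + (j%:R + j.+1%:R) / 2 / q * (w - u) =
    ((u + a * (w - u)) + (u + b * (w - u))) / 2 by rewrite /a /b; field; rewrite gt_eqF.
have -> : phi u + (j%:R + j.+1%:R) / 2 / q * (phi w - phi u) =
    ((phi u + a * (phi w - phi u)) + (phi u + b * (phi w - phi u))) / 2.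
  by rewrite /a /b; field; rewrite gt_eqF.
apply: le_trans (phi_mid ha hb) _.
by rewrite ler_pM2r ?invr_gt0 // lerD // IH.
Qed.

Lemma midpoint_convex_ordered (u w l : R) : 0 <= u -> u <= w -> 0 <= l <= 1 ->
  phi (u + l * (w - u)) <= phi u + l * (phi w - phi u).
Proof.
move=> u0 uw /andP[l0 l1]; have w0 : 0 <= w := le_trans u0 uw.
set C := phi w - phi u; have C0 : 0 <= C by rewrite subr_ge0 phi_incr.
apply/ler_addgt0Pr => e e0.
set n := (Num.truncn (C / e)).+1; set q : R := 2 ^+ n.
have q0 : 0 < q by rewrite exprn_gt0.
have Cq : C / q <= e.
  have := truncnS_gt (C / e); rewrite -/n ltr_pdivrMr // => /ltW Cn.
  rewrite ler_pdivrMr //; apply: le_trans Cn _; rewrite mulrC ler_pM2l //.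
  by rewrite /q -natrX ler_nat ltnW // ltn_expl.
(* round [l] up to the dyadic grid of mesh [1/q] *)
set k := minn (Num.truncn (l * q)).+1 (2 ^ n).
have kle : (k <= 2 ^ n)%N by rewrite geq_minr.
have lk : l <= k%:R / q.
  rewrite ler_pdivlMr // /k; case: leqP => _; last first.
    by rewrite natrX -/q ler_piMl // ltW.
  exact/ltW/truncnS_gt.
have kl : k%:R / q <= l + 1 / q.
  rewrite ler_pdivrMr // mulrDl mul1r mulVf ?gt_eqF //.
  apply: (le_trans (y := (Num.truncn (l * q)).+1%:R)); first by rewrite ler_nat geq_minl.
  by rewrite -addn1 natrD lerD2r truncn_le mulr_ge0 // ltW.
have z0 : 0 <= u + l * (w - u) by rewrite convex_comb_ge0 //; apply/andP.
apply: (le_trans (y := phi (u + k%:R / q * (w - u)))).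
  by apply: phi_incr z0 _; rewrite lerD2l ler_wpM2r // subr_ge0.
apply: le_trans (midpoint_convex_dyadic kle u0 w0) _.
rewrite -/q -/C -addrA lerD2l; apply: le_trans (ler_wpM2r C0 kl) _.
by rewrite mulrDl lerD2l mul1r mulrC.
Qed.

Lemma midpoint_convex (u w l : R) : 0 <= u -> 0 <= w -> 0 <= l <= 1 ->
  phi (u + l * (w - u)) <= phi u + l * (phi w - phi u).
Proof.
move=> u0 w0 /andP[l0 l1]; have [uw|wu] := leP u w.
  by apply: midpoint_convex_ordered => //; apply/andP.
have -> : u + l * (w - u) = w + (1 - l) * (u - w) by ring.
have -> : phi u + l * (phi w - phi u) = phi w + (1 - l) * (phi u - phi w) by ring.
by apply: midpoint_convex_ordered (ltW wu) _ => //; apply/andP; split; lra.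
Qed.

End midpoint_convex.

Section strictly_convex_increasing.
Variables (R : realType) (phi : R -> R).
Hypothesis phi_sconv : strictly_convex_on_nonneg phi.
Hypothesis phi_incr : increasing_on_nonneg phi.
Hypothesis phi0 : phi 0 = 0.

Lemma phi_ge0 (s : R) : 0 <= s -> 0 <= phi s.
Proof. by move=> s0; rewrite -phi0; apply: phi_incr. Qed.

Lemma phi_midpoint_le (s t : R) : 0 <= s -> 0 <= t ->
  phi ((s + t) / 2) <= (phi s + phi t) / 2.
Proof.
move=> s0 t0; have [->|st] := eqVneq s t; last exact/ltW/phi_sconv.
have -> : (t + t) / 2 = t by field.
lra.
Qed.

Let phi_convex := midpoint_convex phi_midpoint_le phi_incr.

Lemma phi_sym_sum_le (a b c : R) : 0 <= a -> 0 <= b -> 2 <= a + b ->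
  0 <= c <= 1 -> 1 + c <= Num.max a b -> phi (1 + c) + phi (1 - c) <= phi a + phi b.
Proof.
wlog ca : a b / 1 + c <= a.
  move=> hw a0 b0 ab c01 cm; have [ca|ac] := leP (1 + c) a; first exact: hw.
  rewrite [phi a + _]addrC; apply: hw => //; last by rewrite maxC.
    by move: cm; rewrite le_max leNgt ac.
  by rewrite addrC.
move=> a0 b0 ab /andP[c0 c1] _.
have [bc|bc] := leP (1 - c) b.
  by apply: lerD; apply: phi_incr => //; lra.
(* both [1 - c] and [1 + c] lie in [b, 2 - b], symmetrically *)
set L := (1 - c - b) / (2 - 2 * b).
have L01 : 0 <= L <= 1.
  by rewrite divr_ge0 ?ler_pdivrMr /=; lra.
have L'01 : 0 <= 1 - L <= 1 by move: L01 => /andP[]; lra.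
have b2 : 0 <= 2 - b by lra.
have := phi_convex b0 b2 L01; have := phi_convex b0 b2 L'01.
have -> : b + L * (2 - b - b) = 1 - c by rewrite /L; field; lra.
have -> : b + (1 - L) * (2 - b - b) = 1 + c by rewrite /L; field; lra.
have : phi (2 - b) <= phi a by apply: phi_incr => //; lra.
lra.
Qed.

Definition phi_gap (c : R) := (phi (1 + c) + phi (1 - c)) / 2 - phi 1.

Lemma phi_gap_ge0 (c : R) : 0 <= c <= 1 -> 0 <= phi_gap c.
Proof.
move=> /andP[c0 c1]; rewrite subr_ge0.
have := @phi_midpoint_le (1 + c) (1 - c) ltac:(lra) ltac:(lra).
by have -> : (1 + c + (1 - c)) / 2 = 1 by field.
Qed.

Lemma phi_gap_gt0 (c : R) : 0 < c <= 1 -> 0 < phi_gap c.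
Proof.
move=> /andP[c0 c1]; rewrite subr_gt0.
have := @phi_sconv (1 + c) (1 - c) ltac:(lra) ltac:(lra).
have -> : (1 + c + (1 - c)) / 2 = 1 by field.
by apply; apply/negP => /eqP; lra.
Qed.

Lemma phi_right_cont1 (e : R) : 0 < e ->
  exists2 dl : R, 0 < dl & phi (1 + dl) < phi 1 + e.
Proof.
move=> e0; set K := phi 2 - phi 1.
have K0 : 0 <= K by rewrite subr_ge0; apply: phi_incr; lra.
set dl := Num.min 1 (e / (K + 1)).
have dl0 : 0 < dl by rewrite lt_min ltr01 divr_gt0 //; lra.
have dl1 : dl <= 1 by rewrite ge_min lexx.
have dle : dl * (K + 1) <= e by rewrite -ler_pdivlMr ?ge_min ?lexx ?orbT //; lra.
exists dl => //.
have dl01 : 0 <= dl <= 1 by rewrite dl1 ltW.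
have := @phi_convex 1 2 dl ler01 ltac:(lra) dl01.
rewrite (_ : 2 - 1 = 1) ?mulr1 -/K; last by lra.
move=> /le_lt_trans; apply; rewrite ltrD2l.
by apply: lt_le_trans dle; rewrite ltr_pM2l //; lra.
Qed.

End strictly_convex_increasing.

Local Notation spread x z := (Num.max `|x + z| `|x - z|).

Section norm_spread.
Variables (R : realType) (X : normedModType R).

Lemma norm_add_sub_ge (x z : X) : 2 * `|x| <= `|x + z| + `|x - z|.
Proof.
apply: le_trans (ler_normD _ _).
by rewrite addrACA subrr addr0 -mulr2n normrMn mulr_natl.
Qed.

Lemma spread_ge_norm (x z : X) : `|x| <= spread x z.
Proof.
have := norm_add_sub_ge x z; rewrite le_max.
by case: (leP `|x| `|x + z|) => //= h1 h2; lra.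
Qed.

(* [x + t y] is the convex combination [((1 + t) (x + y) + (1 - t) (x - y)) / 2] *)
Lemma norm_addZ_le_spread (x y : X) (t : R) : `|t| <= 1 ->
  `|x + t *: y| <= spread x y.
Proof.
rewrite ler_norml => /andP[t1 t2].
have -> : x + t *: y = ((1 + t) / 2) *: (x + y) + ((1 - t) / 2) *: (x - y).
  rewrite !scalerDr scalerN addrACA -scalerDl -scalerBl.
  rewrite (_ : _ + _ = 1) ?scale1r; last by field.
  by rewrite (_ : _ - _ = t) //; field.
apply: le_trans (ler_normD _ _) _; rewrite !normrZ !ger0_norm; [|lra..].
set M := Num.max _ _.
have : `|x + y| <= M by rewrite le_max lexx.
have : `|x - y| <= M by rewrite le_max lexx orbT.
nra.
Qed.

Lemma spread_scale_le (x y : X) (s : R) : `|s| <= 1 ->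
  spread x (s *: y) <= spread x y.
Proof.
move=> s1; rewrite ge_max norm_addZ_le_spread //=.
by rewrite -scaleNr norm_addZ_le_spread ?normrN.
Qed.

Lemma spread_half_le (x y : X) (t : R) : 1 / 2 <= `|t| ->
  spread x (2^-1 *: y) <= spread x (t *: y).
Proof.
move=> ht; have t0 : t != 0 by apply: contraTneq ht => ->; rewrite normr0; lra.
rewrite (_ : 2^-1 *: y = (2 * t)^-1 *: (t *: y)); last first.
  by rewrite scalerA; congr (_ *: _); field.
apply: spread_scale_le; rewrite normfV normrM ger0_norm ?invf_le1; first lra.
- by rewrite mulr_gt0 // normr_gt0.
- lra.
Qed.

Lemma spread_scale_ge (x y : X) (eps dl : R) : eps <= `|y| ->
  (forall z : X, eps / 2 <= `|z| -> 1 + dl <= spread x z) ->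
  forall t : R, 1 / 2 <= `|t| -> 1 + dl <= spread x (t *: y).
Proof.
move=> ey hz t ht; apply: hz; rewrite normrZ.
by apply: le_trans (ler_wpM2r (normr_ge0 y) ht); lra.
Qed.

End norm_spread.

Section symmetric_expectation.
Variables (R : realType) (d : measure_display) (T : measurableType d).
Variables (P : probability T R) (r : {RV P >-> R}).
Hypothesis r_sym : symmetric_rv P r.

Lemma measurable_rv : measurable_fun setT r.
Proof. exact: measurable_funPT. Qed.

Lemma ge0_integral_symmetric (g : R -> \bar R) : measurable_fun setT g ->
  (forall t, 0 <= g t)%E -> (\int[P]_w g (r w) = \int[P]_w g (- r w)%R)%E.
Proof.
move=> mg g0; have mnr := measurable_funN measurable_rv.
transitivity (\int[pushforward P r]_(t in setT) g t)%E.
  by rewrite ge0_integral_pushforward ?preimage_setT //; exact: measurable_rv.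
rewrite (eq_measure_integral (pushforward P (fun w => - r w))).
  by rewrite ge0_integral_pushforward ?preimage_setT.
by move=> A mA _; exact: r_sym.
Qed.

End symmetric_expectation.

Section expectation_bounds.
Variables (R : realType) (phi : R -> R).
Hypothesis phi_sconv : strictly_convex_on_nonneg phi.
Hypothesis phi_incr : increasing_on_nonneg phi.
Hypothesis phi0 : phi 0 = 0.
Variables (X : normedModType R) (d : measure_display) (T : measurableType d).
Variables (P : probability T R) (r : {RV P >-> R}).
Hypothesis r_sym : symmetric_rv P r.
Hypothesis r_inf : ess_sup P (fun w => (`|r w|)%:E) = 1%E.

Lemma measurable_phi_norm (x y : X) :
  measurable_fun setT (fun t : R => phi `|x + t *: y|).
Proof.
(* [phi] is only monotone on [[0, oo)], so compose the norm with [phi \o max 0] *)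
have -> : (fun t : R => phi `|x + t *: y|) =
    (fun s => phi (Num.max 0 s)) \o (fun t => `|x + t *: y|).
  by apply/funext => t /=; rewrite max_r.
apply: measurableT_comp; last first.
  apply: continuous_measurable_fun => t.
  apply: (continuous_comp (f := fun t : R => x + t *: y)); last exact: norm_continuous.
  apply: continuousD; first exact: cst_continuous.
  by apply: continuousZr_tmp => ?.
apply: nondecreasing_measurable => // s t st.
apply: phi_incr; first by rewrite le_max lexx.
by rewrite ge_max !le_max lexx st orbT.
Qed.

Lemma emeasurable_phi_norm (x y : X) (f : T -> R) : measurable_fun setT f ->
  measurable_fun setT (fun w => (phi `|x + f w *: y|)%:E).
Proof. by move=> mf; apply/measurable_EFinP/(measurableT_comp (measurable_phi_norm x y)). Qed.

Lemma Ephi_ge0 (x y : X) : (0 <= Ephi P r phi x y)%E.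
Proof. by apply: integral_ge0 => w _; rewrite lee_fin phi_ge0. Qed.

Lemma Ephi_double (x y : X) :
  (Ephi P r phi x y + Ephi P r phi x y =
   \int[P]_w ((phi `|x + r w *: y|)%:E + (phi `|x + (- r w) *: y|)%:E))%E.
Proof.
rewrite (ge0_integralD P measurableT) //.
- congr (_ + _)%E; apply: (ge0_integral_symmetric r_sym (g := fun t => (phi `|x + t *: y|)%:E)).
    by apply/measurable_EFinP; exact: measurable_phi_norm.
  by move=> t; rewrite lee_fin phi_ge0.
- by move=> w _; rewrite lee_fin phi_ge0.
- exact/emeasurable_phi_norm/measurable_rv.
- by move=> w _; rewrite lee_fin phi_ge0.
- exact/emeasurable_phi_norm/measurable_funN/measurable_rv.
Qed.

Let r_large := [set w | 1 / 2 <= `|r w|].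

Lemma measurable_r_large : measurable r_large.
Proof.
have -> : r_large = ((fun u : R => `|u|) \o r) @^-1` `[1 / 2, +oo[%classic.
  by apply/seteqP; split => w /=; rewrite in_itv /= andbT.
by rewrite -[_ @^-1` _]setTI; apply: measurableT_comp.
Qed.

Lemma ae_abs_rv_le1 : {ae P, forall w, `|r w| <= 1}.
Proof.
have : (ess_sup P (fun w => (`|r w|)%:E) <= 1)%E by rewrite r_inf.
by move/ess_supP; apply: filterS => w; rewrite lee_fin.
Qed.

Lemma r_large_measureE : P r_large = (fine (P r_large))%:E.
Proof.
rewrite fineK // ge0_fin_numE ?measure_ge0 //.
by rewrite (le_lt_trans (probability_le1 P measurable_r_large)) ?ltey.
Qed.

(* if [|r| < 1/2] almost surely, the essential supremum of [|r|] would be at most [1/2] *)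
Lemma r_large_gt0 : 0 < fine (P r_large).
Proof.
rewrite -lte_fin -r_large_measureE lt0e measure_ge0 andbT; apply/negP => /eqP PA0.
have : (ess_sup P (fun w => (`|r w|)%:E) <= (1 / 2)%:E)%E.
  apply/ess_supP; exists r_large; split => //; first exact: measurable_r_large.
  by move=> w /= /negP; rewrite lee_fin -ltNge => /ltW.
by rewrite r_inf lee_fin; lra.
Qed.

(* [r] and [-r] have the same law, so [2 E] integrates [phi |x + r y| + phi |x - r y|],
   which is at least [2 phi 1], and at least [2 phi 1 + 2 gap] on the event [r_large] *)
Lemma Ephi_ge (x y : X) (c : R) : `|x| = 1 -> 0 <= c <= 1 ->
  (forall t : R, 1 / 2 <= `|t| -> 1 + c <= spread x (t *: y)) ->
  ((phi 1 + phi_gap phi c * fine (P r_large))%:E <= Ephi P r phi x y)%E.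
Proof.
move=> x1 c01 hc; have mA := measurable_r_large.
have g0 : 0 <= phi_gap phi c := phi_gap_ge0 phi_sconv c01.
have phi10 : 0 <= phi 1 by rewrite phi_ge0.
set f := fun w => ((phi 1)%:E + (phi_gap phi c)%:E * (\1_r_large w)%:E)%E.
have f0 w : (0 <= f w)%E by rewrite adde_ge0 ?mule_ge0 ?lee_fin ?indic_ge0.
have mf : measurable_fun setT f.
  apply: emeasurable_funD => //; apply: emeasurable_funM => //.
  by apply/measurable_EFinP; exact: measurable_indic.
have intf : (\int[P]_w f w = (phi 1 + phi_gap phi c * fine (P r_large))%:E)%E.
  rewrite (ge0_integralD P measurableT) //; last 2 first.
  - by move=> w _; rewrite mule_ge0 ?lee_fin ?indic_ge0.
  - by apply: emeasurable_funM => //; apply/measurable_EFinP; exact: measurable_indic.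
  have PT : P setT = 1%E by exact: probability_setT.
  rewrite integral_cst // [X in (_ * X + _)%E]PT mule1 ge0_integralZl_EFin //.
    by rewrite integral_indic // setIT [X in (_ * X)%E]r_large_measureE -EFinM -EFinD.
  by apply/measurable_EFinP; exact: measurable_indic.
have f_le w : (f w + f w <=
    (phi `|x + r w *: y|)%:E + (phi `|x + (- r w) *: y|)%:E)%E.
  rewrite /f -!EFinM -!EFinD lee_fin scaleNr.
  have := norm_add_sub_ge x (r w *: y); have := spread_ge_norm x (r w *: y).
  rewrite x1 mulr1 /indic; case: (boolP (w \in r_large)) => [/set_mem wA|_] h1 h2.
    have := phi_sym_sum_le phi_sconv phi_incr (normr_ge0 _) (normr_ge0 _) h2 c01 (hc _ wA).
    by rewrite mulr1 /phi_gap; lra.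
  have := phi_sym_sum_le phi_sconv phi_incr (normr_ge0 _) (normr_ge0 _) h2 (c := 0).
  by rewrite addr0 subr0 lexx ler01 mulr0 => /(_ isT h1); lra.
have : (\int[P]_w f w + \int[P]_w f w <= Ephi P r phi x y + Ephi P r phi x y)%E.
  rewrite Ephi_double -(ge0_integralD P measurableT) //; apply: ge0_le_integral => //.
  - by move=> w _; rewrite adde_ge0.
  - by apply: emeasurable_funD.
  - by apply: emeasurable_funD; apply: emeasurable_phi_norm;
      [exact: measurable_rv|exact/measurable_funN/measurable_rv].
rewrite intf; move: (Ephi_ge0 x y); case: (Ephi P r phi x y) => [s _|_ _|//].
  by rewrite -!EFinD !lee_fin; lra.
by rewrite leey.
Qed.

Lemma Ephi_ge1 (x y : X) : `|x| = 1 -> ((phi 1)%:E <= Ephi P r phi x y)%E.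
Proof.
move=> x1; have := @Ephi_ge x y 0 x1; rewrite lexx ler01 /phi_gap addr0 subr0.
rewrite (_ : (phi 1 + phi 1) / 2 - phi 1 = 0) ?mul0r ?addr0; last by field.
by apply => // t _; rewrite -x1 spread_ge_norm.
Qed.

Lemma Ephi_le (x y : X) (M : R) : 0 <= M -> spread x y <= M ->
  (Ephi P r phi x y <= (phi M)%:E)%E.
Proof.
move=> M0 hM; apply: le_trans (_ : \int[P]_w (cst (phi M)%:E) w <= _)%E; last first.
  by rewrite integral_cst // [X in (_ * X)%E]probability_setT mule1.
apply: (ae_ge0_le_integral measurableT) => //.
- by move=> w _; rewrite lee_fin phi_ge0.
- by apply: emeasurable_phi_norm; exact: measurable_rv.
- by move=> w _; rewrite lee_fin phi_ge0.
apply: filterS ae_abs_rv_le1 => w hw _; rewrite lee_fin phi_incr //.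
exact: le_trans (norm_addZ_le_spread _ _ hw) hM.
Qed.

Lemma Ephi_ge_of_spread (dl : R) : 0 < dl -> exists2 kappa : R, 0 < kappa &
  forall x y : X, `|x| = 1 ->
    (forall t : R, 1 / 2 <= `|t| -> 1 + dl <= spread x (t *: y)) ->
    ((phi 1 + kappa)%:E <= Ephi P r phi x y)%E.
Proof.
move=> dl0; set c := Num.min dl 1.
have c01 : 0 < c <= 1 by rewrite lt_min dl0 ltr01 ge_min lexx orbT.
exists (phi_gap phi c * fine (P r_large)).
  by rewrite mulr_gt0 ?r_large_gt0 ?phi_gap_gt0.
move=> x y x1 hdl; apply: Ephi_ge => //; first by case/andP: c01 => /ltW -> ->.
by move=> t /hdl; apply: le_trans; rewrite lerD2l ge_min lexx.
Qed.

Lemma spread_ge_of_Ephi (e : R) : 0 < e -> exists2 dl : R, 0 < dl &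
  forall x y : X, ((phi 1 + e)%:E <= Ephi P r phi x y)%E -> 1 + dl <= spread x y.
Proof.
move=> e0; have [dl dl0 phi_dl] := phi_right_cont1 phi_sconv phi_incr e0.
exists dl => // x y hE; rewrite leNgt; apply/negP => /ltW hlt.
have := le_trans hE (Ephi_le _ hlt); rewrite lee_fin; lra.
Qed.

Lemma extreme_ptP (x : X) : `|x| = 1 ->
  extreme_pt x <-> (forall y : X, Ephi P r phi x y = (phi 1)%:E -> y = 0).
Proof.
move=> x1; split=> [[_ hext] y hE|hE]; last first.
  split=> // y hy; apply: hE; apply/eqP; rewrite eq_le Ephi_ge1 // andbT.
  by rewrite Ephi_le ?hy.
apply/eqP/negPn/negP => y0.
set dl := spread x (2^-1 *: y) - 1.
have dl0 : 0 < dl.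
  have s1 : 1 <= spread x (2^-1 *: y) by rewrite -{1}x1 spread_ge_norm.
  rewrite subr_gt0 lt_neqAle s1 andbT; apply: contra y0 => /eqP/esym/hext.
  by move/eqP; rewrite scaler_eq0 invr_eq0 pnatr_eq0.
have [kappa kappa0 /(_ x y x1) hk] := Ephi_ge_of_spread dl0.
have hdl t : 1 / 2 <= `|t| -> 1 + dl <= spread x (t *: y).
  by move=> ht; rewrite /dl addrC subrK spread_half_le.
by have := hk hdl; rewrite hE lee_fin; lra.
Qed.

Lemma strongly_extreme_ptP (x : X) : `|x| = 1 ->
  strongly_extreme_pt x <->
  (forall eps : R, 0 < eps -> exists2 delta : R, 0 < delta &
     forall y : X, eps <= `|y| -> ((phi 1 + delta)%:E <= Ephi P r phi x y)%E).
Proof.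
move=> x1; split=> [[_ hse] eps eps0|hE].
  have [dl dl0 hdl] := hse (eps / 2) (divr_gt0 eps0 (ltr0Sn _ 1)).
  have [kappa kappa0 hk] := Ephi_ge_of_spread dl0.
  by exists kappa => // y ey; apply: hk (spread_scale_ge ey hdl).
split=> // eps eps0; have [e e0 he] := hE eps eps0.
have [dl dl0 hdl] := spread_ge_of_Ephi e0.
by exists dl => // y ey; apply: hdl; apply: he.
Qed.

Lemma uniformly_convexP : @uniformly_convex R X <->
  (forall eps : R, 0 < eps -> (0 < delta_phi P r phi (X := X) eps)%E).
Proof.
split=> [huc eps eps0|hD eps eps0].
  have [dl dl0 hdl] := huc (eps / 2) (divr_gt0 eps0 (ltr0Sn _ 1)).
  have [kappa kappa0 hk] := Ephi_ge_of_spread dl0.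
  apply: (@lt_le_trans _ _ kappa%:E); first by rewrite lte_fin.
  apply: le_ereal_inf_tmp => _ [[x y] /= [x1 ey] <-].
  by rewrite EFinN leeBrDl // -EFinD; exact: hk x y x1 (spread_scale_ge ey (hdl x ^~ x1)).
have [e e0 eD] : exists2 e : R, 0 < e & (e%:E <= delta_phi P r phi (X := X) eps)%E.
  case: (delta_phi P r phi (X := X) eps) (hD eps eps0) => [s s0|_|//].
    by exists s; rewrite ?lte_fin in s0 *.
  by exists 1; rewrite ?ltr01 ?leey.
have [dl dl0 hdl] := spread_ge_of_Ephi e0.
exists dl => // x y x1 ey; apply: hdl.
rewrite EFinD -leeBrDl //; apply: le_trans eD _.
by apply: ereal_inf_lbound; exists (x, y).
Qed.

End expectation_bounds.

Theorem theorem3p1 (R : realType) (X : completeNormedModType R)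
  (phi : R -> R)
  (phi_sconv : strictly_convex_on_nonneg phi)
  (phi_incr : increasing_on_nonneg phi)
  (phi0 : phi 0 = 0)
  (d : measure_display) (T : measurableType d) (P : probability T R)
  (r : {RV P >-> R})
  (r_sym : symmetric_rv P r)
  (r_inf : ess_sup P (fun w => (`|r w|)%:E) = 1%E) :
  (forall x : X, `|x| = 1 ->
     (extreme_pt x <->
      (forall y : X, Ephi P r phi x y = (phi 1)%:E -> y = 0))) /\
  (forall x : X, `|x| = 1 ->
     (strongly_extreme_pt x <->
      (forall eps : R, 0 < eps -> exists2 delta : R, 0 < delta &
         forall y : X, eps <= `|y| ->
           (Ephi P r phi x y >= (phi 1 + delta)%:E)%E))) /\
  (@uniformly_convex R X <->
     (forall eps : R, 0 < eps -> (0 < delta_phi P r phi (X := X) eps)%E)).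
Proof.
split; [|split].
- by move=> x; apply: extreme_ptP.
- by move=> x; apply: strongly_extreme_ptP.
- exact: uniformly_convexP.
Qed.
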